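(* Let $H$ be the 28-element set $H=\{n_M : n\in\mathbb{Z}_{12}\}\cup\{n_m : n\in\mathbb{Z}_{12}\}\cup\{n_{\mathrm{aug}} : n\in\{0,1,2,3\}\}$, and let $\mathcal{S}$ be the symmetric relation on $H$ consisting exactly of the pairs $(n_M,n_m)$, $(n_M,(n+4)_m)$, $(n_M,(n\bmod 4)_{\mathrm{aug}})$, $(n_m,n_M)$, $(n_m,(n+8)_M)$, $(n_m,((n+3)\bmod 4)_{\mathrm{aug}})$ for $n\in\mathbb{Z}_{12}$, together with the reverses of all these pairs. Then the monoid $M_{\mathcal{S}}$ of relations on $H$ generated by $\mathcal{S}$ under composition of relations has the presentation $M_{\mathcal{S}}=\langle \mathcal{S}\mid \mathcal{S}^7=\mathcal{S}^5\rangle$.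
   Context: Indices $n$ of $n_M,n_m$ are taken modulo 12; the elements of $H$ are formal labels (musically: $n_M=\{n,n+4,n+7\}$, $n_m=\{n,n+3,n+7\}$, $k_{\mathrm{aug}}=\{k,k+4,k+8\}$ in $\mathbb{Z}_{12}$; $\mathcal{S}$ is Douthett's relation $\mathcal{P}_{1,0}$ of moving one pitch class by a semitone). Composition of relations: $\mathcal{R}'\mathcal{R}$ is the set of pairs $(x,z)$ such that there exists $y$ with $(x,y)\in\mathcal{R}$ and $(y,z)\in\mathcal{R}'$; the monoid identity is the identity relation on $H$. *)

From mathcomp Require Import all_boot.
Set Implicit Arguments. Unset Strict Implicit. Unset Printing Implicit Defensive.

Definition H : finType := ('I_12 + 'I_12 + 'I_4)%type.

Definition maj (n : nat) : H := inl (inl (inord (n %% 12))).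
Definition mnr (n : nat) : H := inl (inr (inord (n %% 12))).
Definition aug (k : nat) : H := inr (inord (k %% 4)).

Definition relH := {set H * H}.

(* composition: relcomp R' R = R'R = {(x,z) | exists y, (x,y) in R, (y,z) in R'} *)
Definition relcomp (R' R : relH) : relH :=
  [set p | [exists y : H, ((p.1, y) \in R) && ((y, p.2) \in R')]].

Definition idrel : relH := [set p | p.1 == p.2].

Definition relpow (R : relH) (k : nat) : relH := iter k (relcomp R) idrel.

Definition sgen (n : nat) : seq (H * H) :=
  [:: (maj n, mnr n); (maj n, mnr (n + 4)); (maj n, aug n);
      (mnr n, maj n); (mnr n, maj (n + 8)); (mnr n, aug (n + 3))].

Definition S : relH :=
  [set p | [exists n : 'I_12, (p \in sgen n) || ((p.2, p.1) \in sgen n)]].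

(* The monoid congruence on the free monoid on one generator (nat, +)
   generated by the defining relation s^7 = s^5. *)
Inductive pres_cong : nat -> nat -> Prop :=
| pc_base : pres_cong 7 5
| pc_refl i : pres_cong i i
| pc_sym i j : pres_cong i j -> pres_cong j i
| pc_trans i j k : pres_cong i j -> pres_cong j k -> pres_cong i k
| pc_add i j k : pres_cong i j -> pres_cong (i + k) (j + k).

From mathcomp Require Import all_boot zify.

(* The monoid M_S is generated by S alone, so it is the image of (nat, +) under
   k |-> S^k, and the kernel of this map is determined by the index and period
   of S.  A computation with 28 x 28 Boolean matrices shows S^7 = S^5 while
   S^0, ..., S^6 are pairwise distinct: index 5 and period 2.  The congruence
   generated by 7 ~ 5 has the same classes {0}, ..., {4}, {odd >= 5},
   {even >= 5}, each with a representative below 7. *)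

Definition pres_nf (i : nat) : nat := if i < 5 then i else 5 + (i - 5) %% 2.

Lemma pres_nf_lt7 i : pres_nf i < 7.
Proof. rewrite /pres_nf; case: ifP; lia. Qed.

Lemma pres_cong_nf i : pres_cong i (pres_nf i).
Proof.
elim/ltn_ind: i => i IHi; have [lt_i7 | ge_i7] := ltnP i 7.
  have -> : pres_nf i = i by rewrite /pres_nf; case: ifP; lia.
  exact: pc_refl.
have i_i2 : pres_cong i (i - 2).
  have -> : i - 2 = 5 + (i - 7) by lia.
  have {1}-> : i = 7 + (i - 7) by lia.
  exact: pc_add pc_base.
have -> : pres_nf i = pres_nf (i - 2) by rewrite /pres_nf; case: ifP; case: ifP; lia.
by apply: pc_trans i_i2 (IHi _ _); lia.
Qed.

Lemma relpowD (R : relH) i k : relpow R (i + k) = iter k (relcomp R) (relpow R i).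
Proof. by rewrite /relpow addnC iterD. Qed.

Lemma relpow_pres_cong {R : relH} :
  relpow R 7 = relpow R 5 -> forall i j, pres_cong i j -> relpow R i = relpow R j.
Proof.
move=> R75 i j; elim=> [| k | k l _ E | k l m _ E _ E' | k l m _ E].
- exact: R75.
- by [].
- by rewrite E.
- by rewrite E E'.
- by rewrite !relpowD E.
Qed.

(* H is numbered 0..27 (majors, minors, augmented); the matrix computations
   below run on these numbers, because ordinals built with [inord] do not
   reduce under [vm_compute]. *)
Definition codeH (x : H) : nat :=
  match x with inl (inl a) => a | inl (inr a) => 12 + a | inr a => 24 + a end.

Lemma codeH_lt28 x : codeH x < 28.
Proof. by case: x => [[a|a]|a] /=; have := ltn_ord a; lia. Qed.

Lemma codeH_inj : injective codeH.
Proof.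
move=> [[a|a]|a] [[b|b]|b] /=; have := ltn_ord a; have := ltn_ord b; try lia;
  by move=> _ _ eq_ab; do ?congr (_ _); apply: val_inj => /=; lia.
Qed.

Lemma codeH_onto a : a < 28 -> exists x, codeH x = a.
Proof.
move=> lt_a28; have [lt_a12 | ge_a12] := ltnP a 12.
  by exists (inl (inl (Ordinal lt_a12))).
have [lt_a24 | ge_a24] := ltnP a 24.
  have lt_a12' : a - 12 < 12 by lia.
  by exists (inl (inr (Ordinal lt_a12'))); rewrite /= subnKC.
have lt_a4 : a - 24 < 4 by lia.
by exists (inr (Ordinal lt_a4)); rewrite /= subnKC.
Qed.

Lemma has_iota_codeH (P : pred nat) : has P (iota 0 28) = [exists x, P (codeH x)].
Proof.
apply/hasP/existsP => [[a] | [x Px]].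
  by rewrite mem_iota => /codeH_onto[x <-]; exists x.
by exists (codeH x); rewrite ?mem_iota ?codeH_lt28.
Qed.

Definition bmx := seq (seq bool).

Definition bmx_of (f : nat -> nat -> bool) : bmx := mkseq (fun a => mkseq (f a) 28) 28.

Definition bmx_entry (m : bmx) (a b : nat) : bool := nth false (nth [::] m a) b.

Lemma bmx_entryE f a b : a < 28 -> b < 28 -> bmx_entry (bmx_of f) a b = f a b.
Proof. by move=> lt_a lt_b; rewrite /bmx_entry !nth_mkseq. Qed.

Definition bmx_id : bmx := bmx_of (fun a b => a == b).

Definition bmx_comp (m' m : bmx) : bmx :=
  bmx_of (fun a c => has (fun b => bmx_entry m a b && bmx_entry m' b c) (iota 0 28)).

Definition bmx_pow (m : bmx) (k : nat) : bmx := iter k (bmx_comp m) bmx_id.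

Definition rel_of_bmx (m : bmx) : relH := [set p | bmx_entry m (codeH p.1) (codeH p.2)].

Lemma rel_of_bmx_id : rel_of_bmx bmx_id = idrel.
Proof.
by apply/setP => -[x y]; rewrite !inE bmx_entryE ?codeH_lt28 // (inj_eq codeH_inj).
Qed.

Lemma rel_of_bmx_comp m' m :
  rel_of_bmx (bmx_comp m' m) = relcomp (rel_of_bmx m') (rel_of_bmx m).
Proof.
apply/setP => -[x z]; rewrite !inE bmx_entryE ?codeH_lt28 // has_iota_codeH.
by apply: eq_existsb => y; rewrite !inE.
Qed.

Lemma rel_of_bmx_pow m k : rel_of_bmx (bmx_pow m k) = relpow (rel_of_bmx m) k.
Proof.
elim: k => [|k IHk]; first exact: rel_of_bmx_id.
by rewrite [LHS]rel_of_bmx_comp IHk.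
Qed.

Lemma rel_of_bmx_of_inj f g :
  rel_of_bmx (bmx_of f) = rel_of_bmx (bmx_of g) -> bmx_of f = bmx_of g.
Proof.
move=> /setP eq_fg; apply/eq_in_map => a; rewrite mem_iota => /codeH_onto[x <-].
apply/eq_in_map => b; rewrite mem_iota => /codeH_onto[y <-].
by have := eq_fg (x, y); rewrite !inE !bmx_entryE ?codeH_lt28.
Qed.

Lemma rel_of_bmx_pow_inj m i j :
  rel_of_bmx (bmx_pow m i) = rel_of_bmx (bmx_pow m j) -> bmx_pow m i = bmx_pow m j.
Proof. by case: i => [|i]; case: j => [|j]; apply: rel_of_bmx_of_inj. Qed.

Definition code_sgen (n : nat) : seq (nat * nat) :=
  let M k := k %% 12 in let m k := 12 + k %% 12 in let A k := 24 + k %% 4 in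
  [:: (M n, m n); (M n, m (n + 4)); (M n, A n);
      (m n, M n); (m n, M (n + 8)); (m n, A (n + 3))].

Lemma mem_code_sgen n x y : ((codeH x, codeH y) \in code_sgen n) = ((x, y) \in sgen n).
Proof.
have -> : code_sgen n = [seq (codeH p.1, codeH p.2) | p <- sgen n].
  by rewrite /= !inordK ?ltn_mod.
apply/mapP/idP => [[[x' y'] sxy' [/codeH_inj-> /codeH_inj->]] // | sxy].
by exists (x, y).
Qed.

Definition bmx_S : bmx :=
  bmx_of (fun a b => has (fun n => ((a, b) \in code_sgen n) || ((b, a) \in code_sgen n))
                         (iota 0 12)).

Lemma rel_of_bmx_S : rel_of_bmx bmx_S = S.
Proof.
apply/setP => -[x y]; rewrite !in_set bmx_entryE ?codeH_lt28 //.
apply/hasP/existsP => [[n] | [n sxy]].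
  rewrite mem_iota => /= lt_n12; rewrite !mem_code_sgen => sxy.
  by exists (Ordinal lt_n12).
by exists (val n); rewrite ?mem_iota ?ltn_ord ?mem_code_sgen.
Qed.

Lemma bmx_S_pow7 : bmx_pow bmx_S 7 = bmx_pow bmx_S 5.
Proof. by vm_compute. Qed.

Lemma uniq_bmx_S_pow : uniq (mkseq (bmx_pow bmx_S) 7).
Proof. by vm_compute. Qed.

Lemma relpow_S_7_5 : relpow S 7 = relpow S 5.
Proof. by rewrite -rel_of_bmx_S -!rel_of_bmx_pow bmx_S_pow7. Qed.

Lemma relpow_S_inj_lt7 : {in gtn 7 &, injective (relpow S)}.
Proof.
move=> i j lt_i7 lt_j7; rewrite -rel_of_bmx_S -!rel_of_bmx_pow => /rel_of_bmx_pow_inj.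
exact: (mkseq_uniqP _ _ uniq_bmx_S_pow).
Qed.

Lemma relpow_S_nf i : relpow S (pres_nf i) = relpow S i.
Proof. exact: esym (relpow_pres_cong relpow_S_7_5 _ _ (pres_cong_nf i)). Qed.

Theorem mainTheorem2 :
  forall i j : nat, relpow S i = relpow S j <-> pres_cong i j.
Proof.
move=> i j; split=> [eq_ij | ]; last exact: relpow_pres_cong relpow_S_7_5 i j.
have eq_nf : pres_nf i = pres_nf j.
  by apply: relpow_S_inj_lt7; rewrite ?inE ?pres_nf_lt7 // !relpow_S_nf.
apply: pc_trans (pres_cong_nf i) _; rewrite eq_nf.
exact/pc_sym/pres_cong_nf.
Qed.
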